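(* Let $G$ be a connected graph and $T$ a rooted spanning tree of $G$ whose vertices are identified with their preorder labels. Consider the following marking process. For each cross edge $(u,v)$ with $u\le v$, both endpoints $u$ and $v$ receive a message ''Mark up to $\mathrm{LCA}(u,v)$'' (carrying the pair $(u,v)$). Each vertex $w$ waits until it has received all messages destined for it from its children in $T$ and from its incident cross edges; if the received messages are ''Mark up to $\mathrm{LCA}(u_i,v_i)$'' for $i=1,\dots,k$ (with $k\ge1$), it computes $u_{\min}=\min_i u_i$ and $v_{\max}=\max_i v_i$; if $w$ is an ancestor of both $u_{\min}$ and $v_{\max}$ it sends nothing; otherwise it sends ''Mark up to $\mathrm{LCA}(u_{\min},v_{\max})$'' to its parent and marks the edge joining $w$ to its parent. (A vertex receiving no message sends nothing.) Then this process correctly marks $\mathrm{Chain}(\mathrm{LCA}(u,v),u)$ and $\mathrm{Chain}(\mathrm{LCA}(u,v),v)$ for every cross edge $(u,v)$: the set of marked edges is exactly $\bigcup_{(u,v)} \big(\mathrm{Chain}(\mathrm{LCA}(u,v),u)\cup\mathrm{Chain}(\mathrm{LCA}(u,v),v)\big)$, the union over all cross edges.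
   Context: Cross edges are the edges of $G$ not in $T$. Preorder labeling of $T$: the root receives label $1$; whenever a vertex receives label $\ell$, its children are ordered arbitrarily as $c_1,\dots,c_k$ and child $c_i$ receives label $\ell+1+\sum_{j<i}\#\mathrm{desc}(c_j)$, where $\#\mathrm{desc}(c)$ is the number of descendants of $c$ (including $c$); $\le$, $\min$, $\max$ refer to labels. Every vertex is an ancestor of itself; $\mathrm{LCA}(u,v)$ is the lowest common ancestor in $T$. When $v'$ is an ancestor of $v$, $\mathrm{Chain}(v',v)$ is the set of edges on the tree path from $v'$ to $v$. *)

From mathcomp Require Import all_boot.
Set Implicit Arguments. Unset Strict Implicit. Unset Printing Implicit Defensive.

(* Vertices are 'I_N, identified with their (0-based) preorder labels.
   The rooted spanning tree T is given by a parent function [par] and a root [r]. *)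
Section Defs.
Variable N : nat.
Variable par : 'I_N -> 'I_N.
Variable r : 'I_N.
Variable E : rel 'I_N.

Definition anc (a x : 'I_N) : bool := fconnect par x a.

Definition is_child (c v : 'I_N) : bool := (c != r) && (par c == v).

Definition desc (c : 'I_N) : {set 'I_N} := [set x | anc c x].

Definition rooted_tree : Prop := par r = r /\ forall x, fconnect par x r.

Definition is_preorder : Prop :=
  val r = 0 /\
  forall v : 'I_N, exists s : seq 'I_N,
    perm_eq s (enum [pred c | is_child c v]) /\
    forall i, i < size s ->
      val (nth v s i) = val v + 1 + sumn [seq #|desc c| | c <- take i s].

Definition simple_graph : Prop := symmetric E /\ irreflexive E.
Definition connected_graph : Prop := forall x y, connect E x y.

Definition spanning : Prop := forall x, x != r -> E x (par x).

Definition cross (u v : 'I_N) : bool := [&& E u v, par u != v & par v != u].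

Definition is_lca (a u v : 'I_N) : bool :=
  [&& anc a u, anc a v & [forall b, anc b u ==> anc b v ==> anc b a]].

Definition lca (u v : 'I_N) : 'I_N := odflt r [pick a | is_lca a u v].

Definition tedge (x : 'I_N) : {set 'I_N} := [set x; par x].

Definition Chain (a v : 'I_N) : {set {set 'I_N}} :=
  [set tedge x | x in [set x | [&& anc a x, anc x v & x != a]]].

(* A message is the pair (u, v) meaning
   "Mark up to LCA(u,v)". *)
Definition received (prev : 'I_N -> option ('I_N * 'I_N)) (w : 'I_N)
  : seq ('I_N * 'I_N) :=
  [seq (if w <= x then (w, x) else (x, w)) | x : 'I_N <- enum [pred x | cross w x]]
  ++ pmap prev (enum [pred c | is_child c w]).

Definition step (prev : 'I_N -> option ('I_N * 'I_N)) (w : 'I_N)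
  : option ('I_N * 'I_N) :=
  match received prev w with
  | [::] => None
  | p0 :: R =>
      let umin := foldr (fun (p : 'I_N * 'I_N) (m : 'I_N) => if p.1 < m then p.1 else m) p0.1 R in
      let vmax := foldr (fun (p : 'I_N * 'I_N) (m : 'I_N) => if m < p.2 then p.2 else m) p0.2 R in
      if anc w umin && anc w vmax then None else Some (umin, vmax)
  end.

(* synchronous rounds; after N rounds every vertex has its final message *)
Definition msg_after (k : nat) : 'I_N -> option ('I_N * 'I_N) :=
  iter k step (fun _ => None).

Definition message (w : 'I_N) : option ('I_N * 'I_N) := msg_after N w.

(* w marks the edge joining it to its parent iff it sends a message *)
Definition marked : {set {set 'I_N}} :=
  [set tedge w | w in [set w | message w]].

Definition cross_chains : {set {set 'I_N}} :=
  \bigcup_(p : 'I_N * 'I_N | cross p.1 p.2 && (p.1 <= p.2))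
     (Chain (lca p.1 p.2) p.1 :|: Chain (lca p.1 p.2) p.2).

End Defs.

From Pilot Require Import Defs.
From mathcomp Require Import all_boot zify.
Set Implicit Arguments. Unset Strict Implicit. Unset Printing Implicit Defensive.

(* With preorder labels the subtree of w is the interval [w, w + #|desc w|),
   and the tree edge above w lies on some Chain(LCA(u, v), u) exactly when a
   cross edge leaves the subtree of w.  Induction on subtree size shows that
   the pair (umin, vmax) sent by w decides, for every interval containing the
   subtree of w, whether all cross neighbours of the subtree lie in it: the
   labels inside the subtree that the pair forgets cannot matter for such an
   interval.  Taking the subtree itself as the interval, w sends a message
   exactly when a cross edge leaves its subtree. *)

Lemma consecutive_intervals n (D : 'I_n -> {set 'I_n}) (b : nat) (c0 : 'I_n)
    (s : seq 'I_n) :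
  {in s, forall c, D c = [set x : 'I_n | c <= x < c + #|D c|]} ->
  (forall i, i < size s ->
     nth c0 s i = b + sumn [seq #|D c| | c <- take i s] :> nat) ->
  \bigcup_(c <- s) D c = [set x : 'I_n | b <= x < b + sumn [seq #|D c| | c <- s]] /\
  #|\bigcup_(c <- s) D c| = sumn [seq #|D c| | c <- s].
Proof.
elim/last_ind: s => [|s c IH] Dint lab.
  by rewrite big_nil cards0; split=> //; apply/setP=> x; rewrite !inE /= addn0; lia.
case: IH => [d s_d | i lt_i_s | Us cardUs].
    by apply: Dint; rewrite mem_rcons inE s_d orbT.
  move: (lab i); rewrite size_rcons nth_rcons lt_i_s -cats1 takel_cat; last exact: ltnW.
  by apply; apply: ltnW.
have lab_c : c = b + sumn [seq #|D c| | c <- s] :> nat.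
  move: (lab (size s)); rewrite size_rcons nth_rcons ltnn eqxx.
  by rewrite -cats1 take_size_cat //; apply.
have Dc : D c = [set x : 'I_n | c <= x < c + #|D c|].
  by apply: Dint; rewrite mem_rcons mem_head.
rewrite big_rcons /= map_rcons sumn_rcons Us.
set S := sumn _ in lab_c *; set d := #|D c| in Dc *.
have disj : [set x : 'I_n | b <= x < b + S] :&: D c = set0.
  by apply/setP=> x; rewrite Dc !inE lab_c; lia.
split; last by rewrite cardsU disj cards0 subn0 -Us cardUs.
by apply/setP=> x; rewrite in_setU Dc !inE lab_c; lia.
Qed.

Section FoldExtrema.
Variables (n : nat) (T : Type) (f : T -> 'I_n).

Lemma leq_foldr_min lo (x : 'I_n) (s : seq T) :
  (lo <= foldr (fun p (m : 'I_n) => if f p < m then f p else m) x s) =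
  (lo <= x) && all (fun p => lo <= f p) s.
Proof.
elim: s => [|p s IHs] /=; first by rewrite andbT.
set m := foldr _ x s in IHs *.
have -> : (lo <= (if f p < m then f p else m)) = (lo <= f p) && (lo <= m).
  by case: ifP; lia.
by rewrite IHs andbCA.
Qed.

Lemma foldr_max_ltn hi (x : 'I_n) (s : seq T) :
  (foldr (fun p (m : 'I_n) => if m < f p then f p else m) x s < hi) =
  (x < hi) && all (fun p => f p < hi) s.
Proof.
elim: s => [|p s IHs] /=; first by rewrite andbT.
set m := foldr _ x s in IHs *.
have -> : ((if m < f p then f p else m) < hi) = (f p < hi) && (m < hi).
  by case: ifP; lia.
by rewrite IHs andbCA.
Qed.

End FoldExtrema.

Section RootedTree.
Variables (N : nat) (par : 'I_N -> 'I_N) (r : 'I_N).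
Hypothesis par_root : par r = r.
Hypothesis reach_root : forall x, fconnect par x r.

Local Notation anc := (anc par).
Local Notation is_child := (is_child par r).
Local Notation desc := (desc par).

Lemma ancP a x : reflect (exists n, iter n par x = a) (anc a x).
Proof.
apply: (iffP idP) => [x_a | [n <-]]; last exact: fconnect_iter.
by exists (findex par x a); apply: iter_findex.
Qed.

Lemma anc_refl x : anc x x.
Proof. exact: connect0. Qed.

Lemma anc_trans a b x : anc a b -> anc b x -> anc a x.
Proof. by move=> ab bx; apply: connect_trans bx ab. Qed.

Lemma iter_par_root n : iter n par r = r.
Proof. by elim: n => //= n ->. Qed.

(* x = iter (m * k) par x passes through r = iter k par x, a fixed point. *)
Lemma periodic_root x m : 0 < m -> iter m par x = x -> x = r.
Proof.
move=> m_gt0 periodic.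
have iter_mul k : iter (m * k) par x = x.
  by elim: k => [|k IHk]; rewrite ?muln0 // mulnS iterD IHk periodic.
have [k xk] := ancP _ _ (reach_root x).
by rewrite -(iter_mul k) -(subnK (leq_pmull k m_gt0)) iterD xk iter_par_root.
Qed.

Lemma anc_anti a b : anc a b -> anc b a -> a = b.
Proof.
move=> /ancP [[|n] <-] // /ancP [m ba].
have -> : b = r.
  by apply: (@periodic_root _ (m + n.+1)); [rewrite addnS | rewrite iterD].
exact: iter_par_root.
Qed.

Lemma anc_total a b x : anc a x -> anc b x -> anc a b || anc b a.
Proof.
move=> /ancP [n <-] /ancP [m <-]; case: (leqP n m) => [le_nm | /ltnW le_mn].
  by apply/orP; right; apply/ancP; exists (m - n); rewrite -iterD subnK.
by apply/orP; left; apply/ancP; exists (n - m); rewrite -iterD subnK.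
Qed.

Lemma in_desc a x : (x \in desc a) = anc a x.
Proof. by rewrite inE. Qed.

Lemma child_anc c w : is_child c w -> anc w c.
Proof. by case/andP => _ /eqP <-; apply: fconnect1. Qed.

Lemma child_not_anc c w : is_child c w -> ~~ anc c w.
Proof.
move=> cw; apply/negP => /anc_anti /(_ (child_anc cw)) cw_eq.
case/andP: cw => /eqP c_r /eqP; rewrite -{}cw_eq => c_fixed.
by apply/c_r/(@periodic_root c 1).
Qed.

Lemma anc_child w x : anc w x -> x != w -> exists2 c, is_child c w & anc c x.
Proof.
move=> wx x_w; have ex : exists n, iter n par x == w by case/ancP: wx => n <-; exists n.
have [[|n] /eqP xn min_n] := ex_minnP ex; first by rewrite -xn eqxx in x_w.
exists (iter n par x); last exact: fconnect_iter.
rewrite /is_child -iterS xn eqxx andbT; apply/eqP => c_r.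
suff : n < n by rewrite ltnn.
by apply: min_n; rewrite -xn iterS c_r par_root.
Qed.

Lemma desc_childE w : desc w = w |: \bigcup_(c | is_child c w) desc c.
Proof.
apply/setP => x; rewrite !inE; apply/idP/idP => [wx | ].
  have [// | x_w] := eqVneq x w.
  by have [c cw cx] := anc_child wx x_w; apply/bigcupP; exists c; rewrite ?inE.
case/orP => [/eqP -> | /bigcupP [c cw]]; first exact: anc_refl.
by rewrite inE; apply: anc_trans (child_anc cw).
Qed.

Lemma sub_desc_child c w : is_child c w -> desc c \subset desc w.
Proof.
by move=> cw; apply/subsetP => x; rewrite !inE; apply: anc_trans (child_anc cw).
Qed.

Lemma card_desc_child c w : is_child c w -> #|desc c| < #|desc w|.
Proof.
move=> cw; apply: proper_card; rewrite properE sub_desc_child //.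
by apply/subsetPn; exists w; rewrite !inE ?anc_refl ?child_not_anc.
Qed.

Lemma lcaP u v : is_lca par (lca par r u v) u v.
Proof.
rewrite /lca; case: pickP => [a // | no_lca]; exfalso.
have ex : exists n, anc (iter n par u) v.
  by have [n un] := ancP _ _ (reach_root u); exists n; rewrite un; apply: reach_root.
have [n uv min_n] := ex_minnP ex.
move: (no_lca (iter n par u)); rewrite /is_lca uv /anc fconnect_iter /=.
move/negbT/negP; apply; apply/forallP => b; apply/implyP => /ancP [m bu].
apply/implyP => bv; apply/ancP; exists (m - n).
by rewrite -iterD subnK // min_n // bu.
Qed.

Lemma is_lca_sym a u v : is_lca par a u v -> is_lca par a v u.
Proof.
case/and3P => au av /forallP lca_max; apply/and3P; split => //.
apply/forallP => b; apply/implyP => bv; apply/implyP => bu.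
by move: (lca_max b); rewrite bu bv.
Qed.

Lemma Chain_lca a u v : is_lca par a u v ->
  Chain par a u = tedge par @: [set x | anc x u && ~~ anc x v].
Proof.
case/and3P => au av /forallP lca_max.
apply: (congr1 (fun S : {set 'I_N} => tedge par @: S)); apply/setP => x.
rewrite !inE; apply/idP/idP.
  case/and3P => ax xu x_a; rewrite xu; apply: contra x_a => xv.
  by move: (lca_max x); rewrite xu xv => /anc_anti /(_ ax) ->.
case/andP => xu xv; case/orP: (anc_total xu au) => [xa | ax].
  by rewrite (anc_trans xa av) in xv.
by rewrite ax xu /=; apply: contraNneq xv => ->.
Qed.

Hypothesis preorder : is_preorder par r.

Lemma desc_interval w : desc w = [set x : 'I_N | w <= x < w + #|desc w|].
Proof.
have [k lt_k] := ubnP #|desc w|; elim: k w lt_k => // k IHk w lt_k.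
have [s [perm_s lab]] := preorder.2 w.
have s_child c : (c \in s) = is_child c w by rewrite (perm_mem perm_s) mem_enum.
have Dint : {in s, forall c, desc c = [set x : 'I_N | c <= x < c + #|desc c|]}.
  move=> c; rewrite s_child => cw; apply: IHk.
  by have := card_desc_child cw; move: lt_k; lia.
have [Us cardUs] := consecutive_intervals Dint lab.
have desc_w : desc w = w |: \bigcup_(c <- s) desc c.
  by rewrite desc_childE (perm_big _ perm_s) big_enum.
have card_w : #|desc w| = (sumn [seq #|desc c| | c <- s]).+1.
  by rewrite {1}desc_w cardsU1 cardUs Us inE addn1 ltnn add1n.
by rewrite card_w {1}desc_w Us; apply/setP => x; rewrite !inE -val_eqE /=; lia.
Qed.

Variable E : rel 'I_N.
Hypothesis E_sym : symmetric E.

Local Notation cross := (cross par E).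
Local Notation received := (received par r E).

Lemma cross_sym u v : cross u v = cross v u.
Proof. by rewrite /Defs.cross E_sym; congr andb; apply: andbC. Qed.

Definition cross_nbhd w : {set 'I_N} := [set v | [exists u, cross u v && anc w u]].

Lemma mem_cross_nbhd u v w : cross u v -> anc w u -> v \in cross_nbhd w.
Proof. by move=> uv wu; rewrite inE; apply/existsP; exists u; rewrite uv. Qed.

Lemma cross_nbhdE w :
  cross_nbhd w = [set v | cross w v] :|: \bigcup_(c | is_child c w) cross_nbhd c.
Proof.
apply/setP => v; rewrite !inE.
apply/existsP/orP => [[u /andP [uv wu]] | [wv | /bigcupP [c cw]]].
    have [<- | u_w] := eqVneq u w; first by left.
    have [c cw cu] := anc_child wu u_w.
    by right; apply/bigcupP; exists c; rewrite // (mem_cross_nbhd uv).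
  by exists w; rewrite wv anc_refl.
rewrite inE => /existsP [u /andP [uv cu]].
by exists u; rewrite uv (anc_trans (child_anc cw)).
Qed.

Definition window (lo hi : nat) : {set 'I_N} := [set x : 'I_N | lo <= x < hi].

Definition in_window lo hi (p : 'I_N * 'I_N) := (lo <= p.1) && (p.2 < hi).

(* The message (a, b) of w forgets which labels of the subtree of w occur
   among the cross neighbours; it is only faithful for windows containing
   the whole subtree. *)
Definition correct_message w (m : option ('I_N * 'I_N)) : Prop :=
  (forall a b, m = Some (a, b) -> a <= b /\ ~~ (anc w a && anc w b)) /\
  (forall lo hi, desc w \subset window lo hi ->
     oapp (in_window lo hi) true m = (cross_nbhd w \subset window lo hi)).

Section Step.
Variables (prev : 'I_N -> option ('I_N * 'I_N)) (w : 'I_N).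
Hypothesis prev_correct : forall c, is_child c w -> correct_message c (prev c).

Lemma received_ordered : all (fun p : 'I_N * 'I_N => p.1 <= p.2) (received prev w).
Proof.
rewrite /received all_cat all_map all_pmap; apply/andP; split; apply/allP => x.
  by move=> _ /=; case: ifP => // /negbT; rewrite -ltnNge => /ltnW.
rewrite mem_enum => xw /=; case prev_x: (prev x) => [[a b] | ] //=.
by have [/(_ a b prev_x) []] := prev_correct xw.
Qed.

Lemma all_received_in_window lo hi : desc w \subset window lo hi ->
  all (in_window lo hi) (received prev w) = (cross_nbhd w \subset window lo hi).
Proof.
move=> desc_win; have w_win : lo <= w < hi.
  by have := subsetP desc_win w; rewrite !inE anc_refl; apply.
have pair_in_window (v : 'I_N) :
    in_window lo hi (if w <= v then (w, v) else (v, w)) = (lo <= v < hi).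
  by rewrite /in_window; case: ifP => /= /idP wv; lia.
have child_win c : is_child c w -> desc c \subset window lo hi.
  by move=> cw; apply: subset_trans desc_win; apply: sub_desc_child.
rewrite /received all_cat all_map all_pmap cross_nbhdE subUset; congr andb.
  apply/allP/subsetP => win v; rewrite ?mem_enum inE => wv.
    by have := win v; rewrite mem_enum inE wv /= pair_in_window inE; apply.
  by have := win v; rewrite /= pair_in_window !inE; apply.
apply/allP/bigcupsP => win c cw.
  by rewrite -((prev_correct cw).2 _ _ (child_win c cw)); apply: win; rewrite mem_enum.
rewrite mem_enum in cw.
by rewrite /= ((prev_correct cw).2 _ _ (child_win c cw)); apply: win.
Qed.

Lemma step_correct : correct_message w (step par r E prev w).
Proof.
have ordered := received_ordered; have all_win := all_received_in_window.
rewrite /step; case: (received prev w) => [|p0 R] in ordered all_win *.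
  by split => // lo hi /all_win.
set umin := foldr _ p0.1 R; set vmax := foldr _ p0.2 R.
have summary lo hi : in_window lo hi (umin, vmax) = all (in_window lo hi) (p0 :: R).
  by rewrite /in_window /= (leq_foldr_min fst) (foldr_max_ltn snd) andbACA -all_predI.
have umin_vmax : umin <= vmax.
  have := summary umin vmax.+1; rewrite /in_window /= leqnn ltnSn /=.
  by case/andP: ordered => /= p0_ord _ /esym /andP [/andP [? ?] _]; lia.
case: ifP => [inside | outside]; last first.
  by split => [a b [<- <-] | lo hi desc_win /=]; rewrite ?outside // summary all_win.
split => // lo hi desc_win /=; rewrite -all_win // -summary.
have anc_win x : anc w x -> lo <= x < hi.
  by move=> wx; have := subsetP desc_win x; rewrite !inE; apply.
case/andP: inside => /anc_win /andP [lo_umin _] /anc_win /andP [_ vmax_hi].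
by rewrite /in_window lo_umin vmax_hi.
Qed.

End Step.

(* #|desc w| bounds the height of the subtree of w. *)
Lemma msg_after_correct k w :
  #|desc w| <= k -> correct_message w (msg_after par r E k w).
Proof.
elim: k w => [|k IHk] w le_k.
  have : w \in desc w by rewrite inE anc_refl.
  by move: le_k; rewrite leqn0 cards_eq0 => /eqP ->; rewrite inE.
apply: step_correct => c cw; apply: IHk.
by have := card_desc_child cw; move: le_k; lia.
Qed.

Lemma message_correct w : correct_message w (message par r E w).
Proof. by apply: msg_after_correct; rewrite -[X in _ <= X]card_ord max_card. Qed.

Lemma message_sent w : message par r E w = ~~ (cross_nbhd w \subset desc w) :> bool.
Proof.
have [sent faithful] := message_correct w; set hi := w + #|desc w|.
have desc_win : desc w = window w hi by rewrite /window -desc_interval.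
have anc_win x : anc w x = (w <= x < hi) by rewrite -in_desc desc_win inE.
rewrite [in RHS]desc_win -(faithful w hi); last by rewrite -desc_win.
case: (message par r E w) sent => [[a b] /(_ a b erefl) [le_ab] | _] //=.
rewrite /in_window !anc_win /= => outside; apply/esym; apply: contra outside.
case/andP => wa bhi.
by rewrite wa bhi (leq_trans wa le_ab) (leq_ltn_trans le_ab bhi).
Qed.

Lemma cross_chainsE :
  cross_chains par r E = tedge par @: [set w | ~~ (cross_nbhd w \subset desc w)].
Proof.
apply/setP => e; apply/bigcupP/imsetP => [[[u v] /andP [/= uv _]] | [w]].
  have lca_uv := lcaP u v.
  rewrite (Chain_lca lca_uv) (Chain_lca (is_lca_sym lca_uv)) -imsetU.
  case/imsetP => x; rewrite !inE => /orP [/andP [xu xv] | /andP [xv xu]] ->;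
    exists x; rewrite // inE; apply/subsetPn.
    by exists v; [apply: mem_cross_nbhd uv xu | rewrite in_desc].
  by exists u; [apply: (mem_cross_nbhd _ xv); rewrite cross_sym | rewrite in_desc].
rewrite inE => /subsetPn [v]; rewrite !inE => /existsP [u /andP [uv wu]] wv ->.
have [le_uv | /ltnW le_vu] := leqP u v.
  exists (u, v); first by rewrite /= uv le_uv.
  rewrite (Chain_lca (lcaP u v)) in_setU; apply/orP; left.
  by apply/imsetP; exists w; rewrite // inE wu.
exists (v, u); first by rewrite /= cross_sym uv le_vu.
rewrite (Chain_lca (is_lca_sym (lcaP v u))) in_setU; apply/orP; right.
by apply/imsetP; exists w; rewrite // inE wu.
Qed.

End RootedTree.

Theorem theorem6p2 (N : nat) (E : rel 'I_N) (par : 'I_N -> 'I_N) (r : 'I_N) :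
  simple_graph E -> connected_graph E ->
  rooted_tree par r -> spanning par r E -> is_preorder par r ->
  marked par r E = cross_chains par r E.
Proof.
move=> [E_sym _] _ [par_root reach_root] _ preorder.
have sent : [set w | message par r E w] =
            [set w | ~~ (cross_nbhd par E w \subset desc par w)].
  by apply/setP => w; rewrite !inE (message_sent par_root reach_root preorder).
by rewrite /marked sent (cross_chainsE par_root reach_root E_sym).
Qed.
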